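(* Let $F=\langle f_1,\ldots,f_k\rangle$ be a normalized solution to an instance $(\mathcal{T}_{initial},\mathcal{T}_{final},k)$ of Flip Distance, and let $C$ be a component of $\mathcal{D}_F$. Let $f_i$ and $f_h$, with $i<h$, be two flips in $C$. If one of the following conditions holds, then there is a directed path from $f_i$ to $f_h$ in $C$: (1) $\phi(f_h)$ crosses $\epsilon(f_i)$; (2) $\phi(f_h)=\epsilon(f_i)$; (3) $\epsilon(f_i)=\epsilon(f_h)$; (4) $\phi(f_i)=\epsilon(f_h)$, or $\phi(f_i)$ and $\epsilon(f_h)$ share a triangle $T$ in $\mathcal{T}_j$ for some $j$ with $i\le j<h$.
   Context: A triangulation of a finite point set $\mathcal{P}$ in the plane is a partition of the convex hull of $\mathcal{P}$ into triangles whose vertex set is $\mathcal{P}$. For an interior edge $e$ of a triangulation $\mathcal{T}$, the quadrilateral associated with $e$ is the union of the two triangles of $\mathcal{T}$ sharing $e$. A flip $f$ with underlying edge $\epsilon(f)=e$ is admissible in $\mathcal{T}$ if $e\in\mathcal{T}$ and its associated quadrilateral is convex; performing it replaces $e$ by the other diagonal $\phi(f)$ of that quadrilateral. Two distinct edges share a triangle in $\mathcal{T}$ if they are edges of the same triangle of $\mathcal{T}$; two edges between points of $\mathcal{P}$ cross if they intersect in their interiors. A sequence $F=\langle f_1,\ldots,f_r\rangle$ is valid with respect to $\mathcal{T}$ if there are triangulations $\mathcal{T}_0=\mathcal{T},\mathcal{T}_1,\ldots,\mathcal{T}_r$ such that $f_i$ is admissible in $\mathcal{T}_{i-1}$ and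 performing it yields $\mathcal{T}_i$; then we write $\mathcal{T}\xrightarrow{F}\mathcal{T}_r$. Flips in a sequence are distinct objects even if they have the same underlying edge. For $1\le i<j\le r$, flip $f_j$ is adjacent to $f_i$ (written $f_i\to f_j$) if (1) either $\phi(f_i)=\epsilon(f_j)$ or $\phi(f_i)$ and $\epsilon(f_j)$ share a triangle in $\mathcal{T}_{j-1}$, and (2) there is no $p$ with $i<p<j$ and $\epsilon(f_p)=\phi(f_i)$. $\mathcal{D}_F$ is the directed acyclic graph whose nodes are the flips of $F$ and whose arcs are the pairs $f_i\to f_j$; a component of it is a weakly connected component. The flip distance between two triangulations is the minimum length of a valid sequence transforming one into the other. An instance $(\mathcal{T}_{initial},\mathcal{T}_{final},k)$ of Flip Distance consists of two triangulations of $\mathcal{P}$ and $k\in\mathbb{N}$; a solution is a valid sequence $F$ of length $k$ with $\mathcal{T}_{initial}\xrightarrow{F}\mathcal{T}_{final}$, where $k$ is the flip distance between them. For a solution $F=\langle f_1,\ldots,f_k\rangle$, $\mathcal{T}_j$ denotes the outcome of applying $\langle f_1,\ldots,f_j\rangle$ to $\mathcal{T}_{initial}$. A changed edge is an edge of $\mathcal{T}_{initial}$ not in $\mathcal{T}_{final}$; a component of $\mathcal{D}_F$ is essential if it contains a flip whose underlying edge is a changed edge. A solution $F$ is normalized if every component of $\mathcal{D}_F$ is essential and the flips of each component of $\mathcal{D}_F$ appear as a consecutive block in $F$. *)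

(* Points in the plane are row vectors 'rV[R]_2 over an
   arbitrary real field R; the point set P is given by an injective
   indexing pt : 'I_n -> 'rV[R]_2.  Edges are 2-element subsets of 'I_n,
   triangles are 3-element subsets of 'I_n, a triangulation is a set of
   triangles. *)
From HB Require Import structures.
From mathcomp Require Import all_boot all_order all_algebra.
From Stdlib Require Import Relations.Relation_Operators.
Set Implicit Arguments. Unset Strict Implicit. Unset Printing Implicit Defensive.
Import Order.TTheory GRing.Theory Num.Theory.
Local Open Scope ring_scope.

Section FlipDefs.
Variables (R : realFieldType) (n : nat) (pt : 'I_n -> 'rV[R]_2).

Definition xco (p : 'rV[R]_2) : R := p ord0 ord0.
Definition yco (p : 'rV[R]_2) : R := p ord0 (inord 1).

Definition orient (a b c : 'rV[R]_2) : R :=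
  (xco b - xco a) * (yco c - yco a) - (yco b - yco a) * (xco c - xco a).

Definition in_conv (S : {set 'I_n}) (x : 'rV[R]_2) : Prop :=
  exists lam : 'I_n -> R,
    (forall i, 0 <= lam i) /\ (forall i, i \notin S -> lam i = 0) /\
    \sum_i lam i = 1 /\ x = \sum_i lam i *: pt i.

(* x is a convex combination with strictly positive weights on S
   (for a non-degenerate triangle S: x lies in the open interior of S) *)
Definition in_open_conv (S : {set 'I_n}) (x : 'rV[R]_2) : Prop :=
  exists lam : 'I_n -> R,
    (forall i, i \in S -> 0 < lam i) /\ (forall i, i \notin S -> lam i = 0) /\
    \sum_i lam i = 1 /\ x = \sum_i lam i *: pt i.

Definition is_edge (e : {set 'I_n}) : Prop := #|e| = 2%N.

Definition nondeg_triangle (t : {set 'I_n}) : Prop :=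
  exists a b c, t = [set a; b; c] /\ orient (pt a) (pt b) (pt c) != 0.

(* A triangulation of P: a partition of conv(P) into (non-degenerate)
   triangles with vertices in P, whose vertex set is P. *)
Definition triangulation (T : {set {set 'I_n}}) : Prop :=
  [/\ (forall t, t \in T -> nondeg_triangle t),
      (forall t1 t2, t1 \in T -> t2 \in T -> t1 != t2 ->
         forall x, ~ (in_open_conv t1 x /\ in_open_conv t2 x)),
      (forall x, in_conv setT x <-> exists2 t, t \in T & in_conv t x),
      (forall i, exists2 t, t \in T & i \in t) &
      (forall t i, t \in T -> in_conv t (pt i) -> i \in t)].

Definition edge_of (T : {set {set 'I_n}}) (e : {set 'I_n}) : Prop :=
  is_edge e /\ exists2 t, t \in T & e \subset t.

Definition share_tri (T : {set {set 'I_n}}) (e1 e2 : {set 'I_n}) : Prop :=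
  [/\ is_edge e1, is_edge e2, e1 != e2 &
      exists2 t, t \in T & (e1 \subset t) && (e2 \subset t)].

Definition open_seg (p q x : 'rV[R]_2) : Prop :=
  exists s : R, 0 < s < 1 /\ x = (1 - s) *: p + s *: q.

Definition crosses (e1 e2 : {set 'I_n}) : Prop :=
  e1 != e2 /\
  exists a b c d, [/\ a != b, c != d, e1 = [set a; b], e2 = [set c; d] &
    exists x, open_seg (pt a) (pt b) x /\ open_seg (pt c) (pt d) x].

Definition union_convex (t1 t2 : {set 'I_n}) : Prop :=
  forall x y, (in_conv t1 x \/ in_conv t2 x) -> (in_conv t1 y \/ in_conv t2 y) ->
  forall s : R, 0 <= s <= 1 ->
    in_conv t1 ((1 - s) *: x + s *: y) \/ in_conv t2 ((1 - s) *: x + s *: y).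

(* flipping the edge e of T (admissible: e is an interior edge of T whose
   quadrilateral is convex) yields the edge e' and the triangulation T' *)
Definition flip_step (T : {set {set 'I_n}}) (e e' : {set 'I_n})
    (T' : {set {set 'I_n}}) : Prop :=
  exists a b c d : 'I_n,
    [/\ uniq [:: a; b; c; d], e = [set a; b],
        ([set a; b; c] \in T) && ([set a; b; d] \in T),
        union_convex [set a; b; c] [set a; b; d] /\ e' = [set c; d] &
        T' = ((T :\ [set a; b; c]) :\ [set a; b; d]) :|:
             [set [set a; c; d]; [set b; c; d]]].

(* A valid sequence <f_1,...,f_k> w.r.t. T0: eps i = epsilon(f_i),
   phi i = phi(f_i), Ts j = T_j (outcome of the first j flips). *)
Definition valid_run (T0 : {set {set 'I_n}}) (k : nat) (eps phi : nat -> {set 'I_n})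
    (Ts : nat -> {set {set 'I_n}}) : Prop :=
  [/\ Ts 0%N = T0,
      (forall j, (j <= k)%N -> triangulation (Ts j)) &
      (forall i, (1 <= i <= k)%N -> flip_step (Ts i.-1) (eps i) (phi i) (Ts i))].

(* a solution of the instance (Ti, Tf, k) of Flip Distance: a valid sequence
   of length k from Ti to Tf, with k equal to the flip distance *)
Definition solution (Ti Tf : {set {set 'I_n}}) (k : nat) (eps phi : nat -> {set 'I_n})
    (Ts : nat -> {set {set 'I_n}}) : Prop :=
  [/\ valid_run Ti k eps phi Ts, Ts k = Tf &
      forall k' eps' phi' Ts', valid_run Ti k' eps' phi' Ts' -> Ts' k' = Tf ->
        (k <= k')%N].

Section DAG.
Variables (k : nat) (eps phi : nat -> {set 'I_n}) (Ts : nat -> {set {set 'I_n}}).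

Definition adj (i j : nat) : Prop :=
  [/\ (1 <= i)%N, (i < j)%N, (j <= k)%N,
      phi i = eps j \/ share_tri (Ts j.-1) (phi i) (eps j) &
      forall p, (i < p < j)%N -> eps p <> phi i].

Definition wconn : nat -> nat -> Prop := clos_refl_sym_trans nat adj.

Definition dpath : nat -> nat -> Prop := clos_trans nat adj.

Definition is_component (C : nat -> Prop) : Prop :=
  exists j, (1 <= j <= k)%N /\ forall x, C x <-> ((1 <= x <= k)%N /\ wconn j x).

End DAG.

Definition normalized_solution (Ti Tf : {set {set 'I_n}}) (k : nat)
    (eps phi : nat -> {set 'I_n}) (Ts : nat -> {set {set 'I_n}}) : Prop :=
  [/\ solution Ti Tf k eps phi Ts,
      (forall C, is_component k eps phi Ts C ->
         exists x, [/\ C x, edge_of Ti (eps x) & ~ edge_of Tf (eps x)]) &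
      (forall C, is_component k eps phi Ts C ->
         forall i p h, C i -> C h -> (i < p < h)%N -> C p)].

End FlipDefs.

(* The core is condition (2), through an invariant along the sequence:
   every edge of T_m crossing eps(f_i) was last created by f_i or by a flip
   reachable from f_i.  When f_(m+1) flips ab into a diagonal cd crossing
   eps(f_i), the segment eps(f_i) is either ab itself or crosses a side of the
   quadrilateral acbd; such a side shares a triangle of T_m with ab, so its
   creator is adjacent to f_(m+1).  As the two diagonals of a flip cross,
   phi(f_h) = eps(f_i) makes eps(f_h) such a crossing edge, whose creator is
   adjacent to f_h.  The other conditions reduce to (2) by following an edge
   from its removal to its last re-creation. *)

From HB Require Import structures.
From mathcomp Require Import all_boot all_order all_algebra.
From mathcomp Require Import ring lra zify.
From Stdlib Require Import Relations.Relation_Operators.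
Set Implicit Arguments. Unset Strict Implicit. Unset Printing Implicit Defensive.
Import Order.TTheory GRing.Theory Num.Theory.
Local Open Scope ring_scope.

Section RealFacts.
Variable R : realFieldType.
Implicit Types a b c x y O : R.

Lemma mul_self_gt0 x : x != 0 -> 0 < x * x.
Proof. by move=> x0; rewrite -expr2 exprn_even_gt0. Qed.

Lemma divr_gt0_of_mul x O : O != 0 -> 0 < x * O -> 0 < x / O.
Proof.
move=> O0 xO; have -> : x / O = (x * O) / (O * O) by field.
by rewrite divr_gt0 // mul_self_gt0.
Qed.

Lemma mul_lt0_neq0 x y : x * y < 0 -> x != 0 /\ y != 0.
Proof. by move=> xy; split; apply: contraTneq xy => ->; rewrite ?mul0r ?mulr0 ltxx. Qed.

Lemma mul_neq0_lt0 x y : x != 0 -> y != 0 -> ~ 0 < x * y -> x * y < 0.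
Proof.
move=> x0 y0 xy; case: (ltrP (x * y) 0) => // xy0.
by exfalso; apply: xy; rewrite lt0r xy0 andbT mulf_neq0.
Qed.

Lemma mul_lt0_sign a b c d : a * b < 0 -> c * d < 0 ->
  (0 < a * c /\ 0 < b * d) \/ (0 < a * d /\ 0 < b * c).
Proof.
move=> ab cd; have [a0 b0] := mul_lt0_neq0 ab; have [c0 d0] := mul_lt0_neq0 cd.
have abcd : 0 < (a * b) * (c * d) by rewrite nmulr_rgt0.
have e1 : (a * c) * (b * d) = (a * b) * (c * d) by ring.
have e2 : (a * d) * (b * c) = (a * b) * (c * d) by ring.
case: (ltrP 0 (a * c)) => ac; first by left; split => //; rewrite -(pmulr_rgt0 _ ac) e1.
have ad : 0 < a * d.
  have ac' : a * c < 0 by rewrite lt_neqAle ac mulf_neq0.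
  rewrite -(nmulr_rlt0 _ ac') (_ : a * c * (a * d) = (a * a) * (c * d)); last by ring.
  by rewrite pmulr_rlt0 ?mul_self_gt0.
by right; split => //; rewrite -(pmulr_rgt0 _ ad) e2.
Qed.

Lemma between_convex a b c : a < c < b ->
  exists2 t, 0 < t < 1 & (1 - t) * a + t * b = c.
Proof.
case/andP=> ac cb.
have ab0 : 0 < b - a by rewrite subr_gt0 (lt_trans ac).
exists ((c - a) / (b - a)); last by field; rewrite gt_eqF.
apply/andP; split; first by rewrite divr_gt0 // subr_gt0.
by rewrite ltr_pdivrMr // mul1r ltrD2r.
Qed.

Lemma between_convexC a b c : b < c < a ->
  exists2 t, 0 < t < 1 & (1 - t) * a + t * b = c.
Proof.
move=> /between_convex [t /andP[t0 t1] <-].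
by exists (1 - t); [apply/andP; split; lra | ring].
Qed.

Lemma convex_mix_cases t a b : 0 < t < 1 -> (a <= 0 \/ 1 <= a) -> (b <= 0 \/ 1 <= b) ->
  0 < (1 - t) * a + t * b < 1 ->
  [\/ a = 0 /\ b = 1, a = 1 /\ b = 0,
      exists2 s, 0 < s < 1 & (1 - s) * a + s * b = 0 |
      exists2 s, 0 < s < 1 & (1 - s) * a + s * b = 1].
Proof.
move=> /andP [t0 t1] ha hb /andP [m0 m1].
case: ha => ha; case: hb => hb.
- have : (1 - t) * a <= 0 by apply: mulr_ge0_le0; lra.
  have : t * b <= 0 by apply: mulr_ge0_le0; lra.
  lra.
- case: (ltrgtP a 0) => [an|ap|->]; first by apply: Or43; apply: between_convex; lra.
    by lra.
  case: (ltrgtP b 1) => [bn|bp|->]; [lra| |by apply: Or41].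
  by apply: Or44; apply: between_convex; lra.
- case: (ltrgtP b 0) => [bn|bp|->]; first by apply: Or43; apply: between_convexC; lra.
    by lra.
  case: (ltrgtP a 1) => [an|ap|->]; [lra| |by apply: Or42].
  by apply: Or44; apply: between_convexC; lra.
- have : (1 - t) * (a - 1) >= 0 by apply: mulr_ge0; lra.
  have : t * (b - 1) >= 0 by apply: mulr_ge0; lra.
  lra.
Qed.

Lemma convex_mix_ge0 a b t u : 0 < a -> 0 <= t <= u ->
  (1 - u) * a + u * b = 0 -> 0 <= (1 - t) * a + t * b.
Proof.
move=> a0 /andP [t0 tu] e.
have u0 : 0 < u.
  case: (ltrP 0 u) => // u_le0; have u00 : u = 0 by lra.
  by move: e; rewrite u00; lra.
have -> : (1 - t) * a + t * b = ((u - t) * a + t * ((1 - u) * a + u * b)) / u.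
  by field; rewrite gt_eqF.
by rewrite e mulr0 addr0 divr_ge0 ?mulr_ge0 ?subr_ge0 // ltW.
Qed.

Lemma convex_exit b0 b1 g0 g1 : 0 < b0 -> 0 < g0 -> b1 < 0 \/ g1 < 0 ->
  exists2 t, 0 < t < 1 &
   [/\ 0 <= (1 - t) * b0 + t * b1, 0 <= (1 - t) * g0 + t * g1 &
       (1 - t) * b0 + t * b1 = 0 \/ (1 - t) * g0 + t * g1 = 0].
Proof.
move=> b0p g0p neg.
have mix_ge0 a0 a1 t : 0 < a0 -> 0 <= a1 -> 0 < t < 1 -> 0 <= (1 - t) * a0 + t * a1.
  by move=> ? ? /andP [? ?]; nra.
case: (ltrP b1 0) => b1n; case: (ltrP g1 0) => g1n; try by case: neg; lra.
- have [tb tb01 eb] := @between_convexC b0 b1 0 ltac:(by rewrite b0p b1n).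
  have [tg tg01 eg] := @between_convexC g0 g1 0 ltac:(by rewrite g0p g1n).
  have [/andP [tb0 _] /andP [tg0 _]] := (tb01, tg01).
  case: (lerP tb tg) => tbg.
    exists tb => //; split; [lra | | by left].
    by apply: (convex_mix_ge0 g0p _ eg); apply/andP; split; lra.
  exists tg => //; split; [ | lra | by right].
  by apply: (convex_mix_ge0 b0p _ eb); apply/andP; split; lra.
- have [tb tb01 eb] := @between_convexC b0 b1 0 ltac:(by rewrite b0p b1n).
  by exists tb => //; split; [lra | exact: mix_ge0 | left].
- have [tg tg01 eg] := @between_convexC g0 g1 0 ltac:(by rewrite g0p g1n).
  by exists tg => //; split; [exact: mix_ge0 | lra | right].
Qed.

Lemma mul_lt0_frac x y : x * y < 0 -> 0 < x / (x - y) < 1.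
Proof.
move=> xy; have xy0 : x - y != 0.
  by apply: contraTneq xy => /eqP; rewrite subr_eq0 => /eqP ->; rewrite -leNgt -expr2 sqr_ge0.
rewrite (_ : x / (x - y) = (x * (x - y)) / ((x - y) * (x - y))); last by field.
have D := mul_self_gt0 xy0.
by rewrite divr_gt0 /=; [rewrite ltr_pdivrMr // mul1r| |]; nra.
Qed.

Lemma perturb_gt0 s O d a M : 0 < s < 1 -> O != 0 -> 0 < d ->
  d * M <= s * (1 - s) * (O * O) -> `|a| <= M -> 0 < (1 - s) * O * O + d * a.
Proof.
move=> /andP [s0 s1] O0 d0 dM aM; have O2 := mul_self_gt0 O0.
have a_ge : - `|a| <= a by rewrite lerNl -normrN ler_norm.
have : d * `|a| <= d * M by rewrite ler_wpM2l // ltW.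
have : - (d * `|a|) <= d * a by rewrite -mulrN ler_wpM2l // ltW.
have : 0 < (1 - s) * (1 - s) * (O * O) by rewrite mulr_gt0 // mulr_gt0 // subr_gt0.
lra.
Qed.

End RealFacts.

Section PlaneGeometry.
Variable R : realFieldType.
Implicit Types (p q u v w y z : 'rV[R]_2) (s t : R).

Lemma xcoD u v : xco (u + v) = xco u + xco v. Proof. by rewrite /xco !mxE. Qed.
Lemma ycoD u v : yco (u + v) = yco u + yco v. Proof. by rewrite /yco !mxE. Qed.
Lemma xcoZ s u : xco (s *: u) = s * xco u. Proof. by rewrite /xco !mxE. Qed.
Lemma ycoZ s u : yco (s *: u) = s * yco u. Proof. by rewrite /yco !mxE. Qed.
Lemma xcoN u : xco (- u) = - xco u. Proof. by rewrite /xco !mxE. Qed.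
Lemma ycoN u : yco (- u) = - yco u. Proof. by rewrite /yco !mxE. Qed.

Definition coordE := (xcoD, ycoD, xcoZ, ycoZ, xcoN, ycoN).

Lemma row2_eq u v : xco u = xco v -> yco u = yco v -> u = v.
Proof.
move=> ex ey; apply/rowP => j.
have [->|->] : j = ord0 \/ j = inord 1.
  by case: j => [[|[|m]] Hj]; [left|right|by []]; apply/val_inj; rewrite //= inordK.
- exact: ex.
- exact: ey.
Qed.

Lemma orient_xyx p q : orient p q p = 0. Proof. by rewrite /orient; ring. Qed.
Lemma orient_xyy p q : orient p q q = 0. Proof. by rewrite /orient; ring. Qed.

Lemma orient_neq0_perm p q w : orient p q w != 0 ->
  [/\ orient q p w != 0, orient p w q != 0, orient q w p != 0,
      orient w p q != 0 & orient w q p != 0].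
Proof.
move=> h; have oN : - orient p q w != 0 by rewrite oppr_eq0.
by split; [move: oN|move: oN|move: h|move: h|move: oN]; congr (_ != 0); rewrite /orient; ring.
Qed.

Lemma orient_cramer p q w y : orient p q w != 0 ->
  y = (orient y q w / orient p q w) *: p + (orient p y w / orient p q w) *: q
      + (orient p q y / orient p q w) *: w.
Proof. by move=> h; apply: row2_eq; rewrite !coordE /orient in h *; field. Qed.

Lemma orient_cramer_sum p q w y : orient p q w != 0 ->
  orient y q w / orient p q w + orient p y w / orient p q w
      + orient p q y / orient p q w = 1.
Proof. by move=> h; rewrite /orient in h *; field. Qed.

Lemma open_segC p q z : open_seg p q z -> open_seg q p z.
Proof.
case=> s [/andP [s0 s1] ->]; exists (1 - s); split; first by apply/andP; split; lra.
by apply: row2_eq; rewrite !coordE; ring.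
Qed.

Lemma open_seg_endpoint p q : open_seg p q p -> p = q.
Proof.
case=> s [/andP [s0 _] e]; have s_neq0 := lt0r_neq0 s0.
by apply: row2_eq; [have := congr1 (@xco R) e | have := congr1 (@yco R) e];
  rewrite !coordE => h; apply: (mulfI s_neq0); lra.
Qed.

Lemma open_seg_shrink p q z t : open_seg p q z -> 0 < t < 1 ->
  open_seg p q ((1 - t) *: z + t *: p).
Proof.
case=> s [/andP [s0 s1] ->] /andP [t0 t1]; exists ((1 - t) * s); split.
  by apply/andP; split; nra.
by apply: row2_eq; rewrite !coordE; ring.
Qed.

Lemma orient_open_seg p q z : open_seg p q z -> orient p q z = 0.
Proof. by case=> s [_ ->]; rewrite /orient !coordE; ring. Qed.

Lemma orient_mix p q u v t :
  orient p q ((1 - t) *: u + t *: v) = (1 - t) * orient p q u + t * orient p q v.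
Proof. by rewrite /orient !coordE; ring. Qed.

(* The parameter of the orthogonal projection of z on the line through p and q. *)
Definition line_coord p q z :=
  ((xco z - xco p) * (xco q - xco p) + (yco z - yco p) * (yco q - yco p)) /
  ((xco q - xco p) ^+ 2 + (yco q - yco p) ^+ 2).

Lemma line_norm_neq0 p q : p != q -> (xco q - xco p) ^+ 2 + (yco q - yco p) ^+ 2 != 0.
Proof.
apply: contraNneq => e; have := sqr_ge0 (xco q - xco p); have := sqr_ge0 (yco q - yco p).
move=> hy hx; apply/eqP/row2_eq; apply/eqP; rewrite eq_sym -subr_eq0 -sqrf_eq0;
  apply/eqP; lra.
Qed.

Lemma collinear_line_coord p q z : p != q -> orient p q z = 0 ->
  z = (1 - line_coord p q z) *: p + line_coord p q z *: q.
Proof.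
move=> pq oz; have L0 := line_norm_neq0 pq.
rewrite /line_coord; set L := (_ ^+ 2 + _); set D := (_ * _ + _ * _).
have ex : (xco z - xco p) * L = D * (xco q - xco p).
  apply/eqP; rewrite -subr_eq0; apply/eqP.
  by rewrite -[RHS](mulr0 (- (yco q - yco p))) -oz /L /D /orient; ring.
have ey : (yco z - yco p) * L = D * (yco q - yco p).
  apply/eqP; rewrite -subr_eq0; apply/eqP.
  by rewrite -[RHS](mulr0 (xco q - xco p)) -oz /L /D /orient; ring.
apply: row2_eq; rewrite !coordE.
- transitivity (xco p + ((xco z - xco p) * L) / L); first by field.
  by rewrite ex; field.
- transitivity (yco p + ((yco z - yco p) * L) / L); first by field.
  by rewrite ey; field.
Qed.

Lemma line_coord_seg p q s : p != q -> line_coord p q ((1 - s) *: p + s *: q) = s.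
Proof. by move=> /line_norm_neq0; rewrite /line_coord !coordE => L0; field. Qed.

Lemma line_coord_mix p q u v t :
  line_coord p q ((1 - t) *: u + t *: v) = (1 - t) * line_coord p q u + t * line_coord p q v.
Proof. by rewrite /line_coord !coordE; ring. Qed.

Lemma mix_on_line p q a b t :
  (1 - t) *: ((1 - a) *: p + a *: q) + t *: ((1 - b) *: p + b *: q) =
  (1 - ((1 - t) * a + t * b)) *: p + ((1 - t) * a + t * b) *: q.
Proof. by apply: row2_eq; rewrite !coordE; ring. Qed.

(* The three sign conditions say that y lies in the open triangle pqu. *)
Lemma perturb_into_triangle p q u v s :
  orient p q u != 0 -> 0 < s < 1 -> 0 < orient p q (p + v) * orient p q u ->
  exists2 d0, 0 < d0 & forall d, 0 < d <= d0 ->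
   let y := (1 - s) *: p + s *: q + d *: v in
   [/\ 0 < orient y q u * orient p q u, 0 < orient p y u * orient p q u &
       0 < orient p q y * orient p q u].
Proof.
move=> O0 s01 vside; have [s0 s1] := andP s01.
set O := orient p q u in O0 vside *.
set A := orient (p + v) q u - O; set B := orient p (p + v) u.
set m := s * (1 - s) * (O * O); set M := 1 + `|A * O| + `|B * O|.
have M0 : 0 < M by rewrite /M ltr_wpDr // ltr_wpDr.
have m0 : 0 < m by rewrite /m mulr_gt0 ?mul_self_gt0 // mulr_gt0 // subr_gt0.
exists (m / M); first by rewrite divr_gt0.
move=> d /andP [d0 dm] y; have dM : d * M <= m by rewrite -ler_pdivlMr.
have nA : `|A * O| <= M by have := normr_ge0 (B * O); rewrite /M; lra.
have nB : `|B * O| <= M by have := normr_ge0 (A * O); rewrite /M; lra.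
have e1 : orient y q u * O = (1 - s) * O * O + d * (A * O).
  by rewrite /y /A /O /orient !coordE; ring.
have e2 : orient p y u * O = (1 - (1 - s)) * O * O + d * (B * O).
  by rewrite /y /B /O /orient !coordE; ring.
have e3 : orient p q y * O = d * (orient p q (p + v) * O).
  by rewrite /y /O /orient !coordE; ring.
have m' : m = (1 - s) * (1 - (1 - s)) * (O * O) by rewrite /m; ring.
have s01' : 0 < 1 - s < 1 by apply/andP; split; lra.
split; rewrite ?e1 ?e2 ?e3.
- exact: perturb_gt0 dM nA.
- by apply: perturb_gt0 nB; rewrite // -m'.
- by rewrite mulr_gt0.
Qed.

End PlaneGeometry.

Lemma set3P (T : finType) (x a b c : T) :
  reflect [\/ x = a, x = b | x = c] (x \in [set a; b; c]).
Proof.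
rewrite !inE -orbA.
apply: (iffP or3P) => -[] /eqP; do ?[by constructor 1|by constructor 2|by constructor 3].
all: by move=> ->; rewrite eqxx ?orbT.
Qed.
Arguments set3P {T x a b c}.

Section ConvexCombinations.
Variables (R : realFieldType) (n : nat) (pt : 'I_n -> 'rV[R]_2).
Local Notation orientI a b c := (orient (pt a) (pt b) (pt c)).

Definition weights3 (a b c : 'I_n) (la lb lc : R) (i : 'I_n) : R :=
  (if i == a then la else 0) + (if i == b then lb else 0) + (if i == c then lc else 0).

Lemma sum_weights3 a b c la lb lc : \sum_i weights3 a b c la lb lc i = la + lb + lc.
Proof.
have sum1 (x : 'I_n) (l : R) : \sum_i (if i == x then l else 0) = l.
  by rewrite (bigD1 x) //= eqxx big1 ?addr0 // => i /negbTE ->.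
by rewrite /weights3 !big_split /= !sum1.
Qed.

Lemma sumZ_weights3 a b c la lb lc :
  \sum_i weights3 a b c la lb lc i *: pt i = la *: pt a + lb *: pt b + lc *: pt c.
Proof.
have sum1 (x : 'I_n) (l : R) : \sum_i ((if i == x then l else 0) *: pt i) = l *: pt x.
  by rewrite (bigD1 x) //= eqxx big1 ?addr0 // => i /negbTE ->; rewrite scale0r.
by rewrite /weights3; under eq_bigr => i _ do rewrite !scalerDl; rewrite !big_split /= !sum1.
Qed.

Lemma weights3_out a b c la lb lc i : i \notin [set a; b; c] -> weights3 a b c la lb lc i = 0.
Proof. by rewrite !inE /weights3; do 3 case: (_ == _) => //=; rewrite !addr0. Qed.

Lemma in_conv3 a b c la lb lc :
  0 <= la -> 0 <= lb -> 0 <= lc -> la + lb + lc = 1 ->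
  in_conv pt [set a; b; c] (la *: pt a + lb *: pt b + lc *: pt c).
Proof.
move=> ha hb hc hs; exists (weights3 a b c la lb lc).
split; [|split; [exact: weights3_out | by rewrite sum_weights3 sumZ_weights3]].
by move=> i; rewrite /weights3; do 3 case: (_ == _); rewrite ?addr0 ?add0r ?addr_ge0.
Qed.

Lemma orient_neq0_distinct a b c : orientI a b c != 0 -> [/\ a != b, a != c & b != c].
Proof.
by move=> h; split; apply: contraNneq h => e; rewrite e /orient; apply/eqP; ring.
Qed.

Lemma in_open_conv3 a b c la lb lc : orientI a b c != 0 ->
  0 < la -> 0 < lb -> 0 < lc -> la + lb + lc = 1 ->
  in_open_conv pt [set a; b; c] (la *: pt a + lb *: pt b + lc *: pt c).
Proof.
move=> /orient_neq0_distinct [ab ac bc] ha hb hc hs.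
exists (weights3 a b c la lb lc).
split; [|split; [exact: weights3_out | by rewrite sum_weights3 sumZ_weights3]].
move=> i /set3P [] ->; rewrite /weights3 eqxx.
- by rewrite (negbTE ab) (negbTE ac) !addr0.
- by rewrite eq_sym (negbTE ab) (negbTE bc) add0r addr0.
- by rewrite eq_sym (negbTE ac) eq_sym (negbTE bc) !add0r.
Qed.

Lemma in_open_conv_orient a b c y : orientI a b c != 0 ->
  0 < orient y (pt b) (pt c) * orientI a b c ->
  0 < orient (pt a) y (pt c) * orientI a b c ->
  0 < orient (pt a) (pt b) y * orientI a b c ->
  in_open_conv pt [set a; b; c] y.
Proof.
move=> O0 h1 h2 h3; rewrite [y in in_open_conv _ _ y](orient_cramer y O0).
by apply: in_open_conv3; rewrite ?divr_gt0_of_mul ?orient_cramer_sum.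
Qed.

Lemma open_conv_meet a b u c d w s t v :
  orientI a b u != 0 -> orientI c d w != 0 -> 0 < s < 1 -> 0 < t < 1 ->
  (1 - s) *: pt a + s *: pt b = (1 - t) *: pt c + t *: pt d ->
  0 < orient (pt a) (pt b) (pt a + v) * orientI a b u ->
  0 < orient (pt c) (pt d) (pt c + v) * orientI c d w ->
  exists y, in_open_conv pt [set a; b; u] y /\ in_open_conv pt [set c; d; w] y.
Proof.
move=> O1 O2 s01 t01 eX v1 v2.
have [d1 d1p H1] := perturb_into_triangle O1 s01 v1.
have [d2 d2p H2] := perturb_into_triangle O2 t01 v2.
have dp : 0 < Num.min d1 d2 by rewrite lt_min d1p d2p.
set dd := Num.min d1 d2 in dp.
have [a1 a2 a3] := H1 dd ltac:(by rewrite dp ge_min lexx).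
have [b1 b2 b3] := H2 dd ltac:(by rewrite dp ge_min lexx orbT).
exists ((1 - s) *: pt a + s *: pt b + dd *: v).
split; first exact: in_open_conv_orient a1 a2 a3.
by rewrite eX; apply: in_open_conv_orient b1 b2 b3.
Qed.

End ConvexCombinations.

Section FinsetFacts.
Variable T : finType.
Implicit Types a b c d x y z : T.

Lemma set3_perm x y z : [/\ [set x; y; z] = [set y; x; z],
   [set x; y; z] = [set x; z; y], [set x; y; z] = [set y; z; x],
   [set x; y; z] = [set z; x; y] & [set x; y; z] = [set z; y; x]].
Proof. by split; apply/setP => i; rewrite !inE; do 3 case: (i == _). Qed.

Lemma set2_eq a b c d : [set a; b] = [set c; d] -> (a = c /\ b = d) \/ (a = d /\ b = c).
Proof.
move=> e.
have /set2P ha : a \in [set c; d] by rewrite -e !inE eqxx.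
have /set2P hb : b \in [set c; d] by rewrite -e !inE eqxx orbT.
have /set2P hc : c \in [set a; b] by rewrite e !inE eqxx.
have /set2P hd : d \in [set a; b] by rewrite e !inE eqxx orbT.
by case: ha hb hc hd => -> [] -> [] ? [] ?; subst; auto.
Qed.

Lemma edge_sub3 (e : {set T}) x y z : #|e| = 2%N -> e \subset [set x; y; z] ->
  [\/ e = [set x; y], e = [set x; z] | e = [set y; z]].
Proof.
move=> /eqP/cards2P [p [q [pq ->]]] sub.
have /set3P hp : p \in [set x; y; z] by apply: (subsetP sub); rewrite !inE eqxx.
have /set3P hq : q \in [set x; y; z] by apply: (subsetP sub); rewrite !inE eqxx orbT.
by case: hp hq pq => -> [] ->; rewrite ?eqxx // => _;
  first [by constructor 1 | by constructor 2 | by constructor 3 |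
         by constructor 1; rewrite setUC | by constructor 2; rewrite setUC |
         by constructor 3; rewrite setUC].
Qed.

End FinsetFacts.

Section Triangulations.
Variables (R : realFieldType) (n : nat) (pt : 'I_n -> 'rV[R]_2).
Hypothesis pt_inj : injective pt.
Variable T : {set {set 'I_n}}.
Hypothesis triT : triangulation pt T.
Local Notation orientI a b c := (orient (pt a) (pt b) (pt c)).

Lemma tri_opposite_vertex t a b : t \in T -> a \in t -> b \in t -> a != b ->
  exists z, t = [set a; b; z] /\ orientI a b z != 0.
Proof.
case: triT => nondeg _ _ _ _ tT ha hb ab.
have [x [y [w [ht O0]]]] := nondeg t tT; subst t.
have [o1 o2 o3 o4 o5] := orient_neq0_perm O0.
have [s1 s2 s3 s4 s5] := set3_perm x y w.
move: ab; case/set3P: ha => ->; case/set3P: hb => ->; rewrite ?eqxx // => _.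
all: first [by exists x; split | by exists y; split | by exists w; split].
Qed.

Lemma tri_orient_neq0 a b c : [set a; b; c] \in T ->
  a != b -> c != a -> c != b -> orientI a b c != 0.
Proof.
move=> tT ab ca cb.
have [z [e Oz]] := tri_opposite_vertex (a := a) (b := b) tT
  ltac:(by rewrite !inE eqxx) ltac:(by rewrite !inE eqxx orbT) ab.
have /set3P : c \in [set a; b; z] by rewrite -e !inE eqxx !orbT.
by case=> ec; rewrite ?ec ?eqxx // in ca cb *.
Qed.

Lemma tri_open_conv_inj t1 t2 y : t1 \in T -> t2 \in T ->
  in_open_conv pt t1 y -> in_open_conv pt t2 y -> t1 = t2.
Proof.
case: triT => _ disj _ _ _ t1T t2T y1 y2.
by apply/eqP; apply: contraT => ne; case: (disj _ _ t1T t2T ne y).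
Qed.

Lemma tri_vertex_of_conv t i : t \in T -> in_conv pt t (pt i) -> i \in t.
Proof. by case: triT => _ _ _ _; apply. Qed.

Definition empty_seg (x y : 'I_n) := x != y /\ forall z, ~ open_seg (pt x) (pt y) (pt z).

Lemma empty_segC x y : empty_seg x y -> empty_seg y x.
Proof. by case=> xy e; split; [rewrite eq_sym | move=> z /open_segC /e]. Qed.

Lemma tri_empty_seg x y w : [set x; y; w] \in T -> orientI x y w != 0 -> empty_seg x y.
Proof.
move=> tT O0; have [xy xw yw] := orient_neq0_distinct O0.
split => // z zxy; have [s [/andP [s0 s1] ez]] := zxy.
have : in_conv pt [set x; y; w] (pt z).
  by rewrite ez -[_ + s *: pt y]addr0 -(scale0r (pt w)); apply: in_conv3 => //; lra.
move/(tri_vertex_of_conv tT)/set3P => -[] ez'; rewrite ez' in zxy ez.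
- by move: xy; rewrite (pt_inj (open_seg_endpoint zxy)) eqxx.
- by move: xy; rewrite (pt_inj (open_seg_endpoint (open_segC zxy))) eqxx.
- by move: O0; rewrite ez /orient !coordE; apply/negP; rewrite negbK; apply/eqP; ring.
Qed.

Lemma edge_of_sub t x y : t \in T -> x \in t -> y \in t -> x != y -> edge_of T [set x; y].
Proof.
move=> tT hx hy xy; split; first by rewrite /is_edge cards2 xy.
by exists t => //; apply/subsetP => z /set2P [] ->.
Qed.

Lemma edge_of_tri x y : edge_of T [set x; y] -> x != y ->
  exists u, [set x; y; u] \in T /\ orientI x y u != 0.
Proof.
move=> [_ [t tT sub]] xy.
have hx : x \in t by apply: (subsetP sub); rewrite !inE eqxx.
have hy : y \in t by apply: (subsetP sub); rewrite !inE eqxx orbT.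
by have [z [et ?]] := tri_opposite_vertex tT hx hy xy; exists z; rewrite -et.
Qed.

Lemma edge_empty_seg x y : edge_of T [set x; y] -> x != y -> empty_seg x y.
Proof. by move=> e xy; have [u [uT Ou]] := edge_of_tri e xy; apply: tri_empty_seg uT Ou. Qed.

(* Otherwise a point near the midpoint of pq, pushed towards u and w, would lie
   in both open triangles. *)
Lemma tri_same_side p q u w : [set p; q; u] \in T -> [set p; q; w] \in T ->
  0 < orientI p q u * orientI p q w -> [set p; q; u] = [set p; q; w].
Proof.
move=> uT wT uw; have [O1 O2] : orientI p q u != 0 /\ orientI p q w != 0.
  by split; apply: contraTneq uw => ->; rewrite ?mul0r ?mulr0 ltxx.
set v := 2^-1 *: (pt u + pt w) - 2^-1 *: (pt p + pt q).
have ev : orient (pt p) (pt q) (pt p + v) = 2^-1 * (orientI p q u + orientI p q w).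
  by rewrite /v /orient !coordE; ring.
have half : 0 < (2^-1 : R) < 1 by rewrite invr_gt0 ltr0n invf_lt1 ?ltr0n ?ltr1n.
have [h0 _] := andP half; have := mul_self_gt0 O1; have := mul_self_gt0 O2 => ? ?.
have vu : 0 < orient (pt p) (pt q) (pt p + v) * orientI p q u by rewrite ev; nra.
have vw : 0 < orient (pt p) (pt q) (pt p + v) * orientI p q w by rewrite ev; nra.
have [y [y1 y2]] := open_conv_meet O1 O2 half half erefl vu vw.
exact: tri_open_conv_inj uT wT y1 y2.
Qed.

Lemma tri_opposite_sides p q u w : [set p; q; u] \in T -> [set p; q; w] \in T ->
  p != q -> u != p -> u != q -> w != p -> w != q -> u != w ->
  orientI p q u * orientI p q w < 0.
Proof.
move=> uT wT pq up uq wp wq uw.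
apply: mul_neq0_lt0; rewrite ?(tri_orient_neq0 uT) ?(tri_orient_neq0 wT) //.
move/(tri_same_side uT wT) => e.
have /set3P : w \in [set p; q; u] by rewrite e !inE eqxx !orbT.
by case=> ew; rewrite ew eqxx in wp wq uw.
Qed.

End Triangulations.

Section Crossings.
Variables (R : realFieldType) (n : nat) (pt : 'I_n -> 'rV[R]_2).
Hypothesis pt_inj : injective pt.
Local Notation orientI a b c := (orient (pt a) (pt b) (pt c)).
Local Notation empty_seg := (empty_seg pt).

Lemma crossesI u w x y X : u != w -> x != y -> [set u; w] != [set x; y] ->
  open_seg (pt u) (pt w) X -> open_seg (pt x) (pt y) X -> crosses pt [set u; w] [set x; y].
Proof. by move=> uw xy ne s1 s2; split => //; exists u, w, x, y; split => //; exists X. Qed.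

Lemma crossesC g1 g2 : crosses pt g1 g2 -> crosses pt g2 g1.
Proof.
case=> ne [u [w [x [y [uw xy e1 e2 [X [s1 s2]]]]]]]; subst g1 g2.
split; first by rewrite eq_sym.
by exists x, y, u, w; split => //; exists X.
Qed.

(* Otherwise an endpoint of one segment would lie inside the other. *)
Lemma collinear_empty_seg_eq x y c d X : empty_seg x y -> empty_seg c d ->
  open_seg (pt x) (pt y) X -> open_seg (pt c) (pt d) X ->
  orientI x y c = 0 -> orientI x y d = 0 -> [set x; y] = [set c; d].
Proof.
move=> [xy exy] [cd ecd] [s [s01 eX]] [t [t01 eX']] oc od.
have pxy : pt x != pt y by apply: contra xy => /eqP /pt_inj ->.
have ec := collinear_line_coord pxy oc; have ed := collinear_line_coord pxy od.
set mc := line_coord _ _ (pt c) in ec; set md := line_coord _ _ (pt d) in ed.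
have outside z m : pt z = (1 - m) *: pt x + m *: pt y -> m <= 0 \/ 1 <= m.
  move=> ez; case: (lerP m 0) => m0; [by left | case: (lerP 1 m) => m1; [by right|]].
  by case: (exy z); exists m; rewrite m0 m1.
have mid : 0 < (1 - t) * mc + t * md < 1.
  by rewrite -line_coord_mix -eX' eX line_coord_seg.
have [[c0 d1]|[c1 d0]|[r r01 er]|[r r01 er]] :=
  convex_mix_cases t01 (outside _ _ ec) (outside _ _ ed) mid.
- move: ec ed; rewrite c0 d1 subr0 subrr !scale1r !scale0r addr0 add0r.
  by move=> /pt_inj <- /pt_inj <-.
- move: ec ed; rewrite c1 d0 subr0 subrr !scale1r !scale0r addr0 add0r.
  by move=> /pt_inj <- /pt_inj <-; rewrite setUC.
- case: (ecd x); exists r; split => //.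
  by rewrite ec ed mix_on_line er subr0 scale1r scale0r addr0.
- case: (ecd y); exists r; split => //.
  by rewrite ec ed mix_on_line er subrr scale1r scale0r add0r.
Qed.

Lemma crossing_sides x y c d X : empty_seg x y -> empty_seg c d ->
  open_seg (pt x) (pt y) X -> open_seg (pt c) (pt d) X -> [set x; y] != [set c; d] ->
  orientI x y c * orientI x y d < 0.
Proof.
move=> exy ecd sxy scd ne; have [t [/andP [t0 t1] eX]] := scd.
have : (1 - t) * orientI x y c + t * orientI x y d = 0.
  by rewrite -orient_mix -eX orient_open_seg.
case: (ltrP (orientI x y c * orientI x y d) 0) => // cd_ge0 mix0; exfalso.
have oc : orientI x y c = 0.
  have : (1 - t) * orientI x y c ^+ 2 <= 0.
    have -> : (1 - t) * orientI x y c ^+ 2 = orientI x y c *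
        ((1 - t) * orientI x y c + t * orientI x y d) - t * (orientI x y c * orientI x y d).
      by ring.
    by rewrite mix0 mulr0 sub0r oppr_le0 mulr_ge0 // ltW.
  rewrite pmulr_rle0 ?subr_gt0 // => oc2.
  by apply/eqP; rewrite -sqrf_eq0 eq_le oc2 sqr_ge0.
have od : orientI x y d = 0.
  by move: mix0; rewrite oc mulr0 add0r => /eqP; rewrite mulf_eq0 gt_eqF // => /eqP.
by move/eqP: ne; apply; apply: collinear_empty_seg_eq exy ecd sxy scd oc od.
Qed.

Lemma crossing_sides2 x y c d X : empty_seg x y -> empty_seg c d ->
  open_seg (pt x) (pt y) X -> open_seg (pt c) (pt d) X -> [set x; y] != [set c; d] ->
  orientI x y c * orientI x y d < 0 /\ orientI c d x * orientI c d y < 0.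
Proof.
move=> exy ecd sxy scd ne; split; first exact: crossing_sides exy ecd sxy scd ne.
by apply: crossing_sides ecd exy scd sxy _; rewrite eq_sym.
Qed.

Lemma edges_not_crosses T g1 g2 : triangulation pt T -> edge_of T g1 -> edge_of T g2 ->
  ~ crosses pt g1 g2.
Proof.
move=> triT e1 e2 [ne [x [y [c [d [xy cd eg1 eg2 [X [sxy scd]]]]]]]]; subst g1 g2.
have [u [uT O1]] := edge_of_tri triT e1 xy; have [w [wT O2]] := edge_of_tri triT e2 cd.
have [sides _] := crossing_sides2 (tri_empty_seg pt_inj triT uT O1)
  (tri_empty_seg pt_inj triT wT O2) sxy scd ne.
have [et|nt] := eqVneq [set x; y; u] [set c; d; w].
  have Oxy z : z \in [set x; y] -> orientI x y z = 0.
    by case/set2P => ->; rewrite ?orient_xyx ?orient_xyy.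
  have off z : z \in [set c; d; w] -> orientI x y z != 0 -> z = u.
    by rewrite -et => /set3P [] // ->; rewrite Oxy ?eqxx // !inE eqxx ?orbT.
  have [Oc Od] := mul_lt0_neq0 sides.
  have ec : c = u by apply: off Oc; rewrite !inE eqxx.
  have ed : d = u by apply: off Od; rewrite !inE eqxx orbT.
  by move: cd; rewrite ec ed eqxx.
set K := orientI x y d - orientI x y c.
have K0 : K != 0.
  by apply: contraTneq sides => /eqP; rewrite subr_eq0 => /eqP ->; rewrite -leNgt -expr2 sqr_ge0.
(* v points towards u across xy and towards w across cd. *)
set v := (orientI x y u * K) *: (pt d - pt c) - (orientI c d w * K) *: (pt y - pt x).
have v1 : 0 < orient (pt x) (pt y) (pt x + v) * orientI x y u.
  rewrite (_ : _ * _ = (orientI x y u * K) * (orientI x y u * K)).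
    by rewrite mul_self_gt0 // mulf_neq0.
  by rewrite /v /K /orient !coordE; ring.
have v2 : 0 < orient (pt c) (pt d) (pt c + v) * orientI c d w.
  rewrite (_ : _ * _ = (orientI c d w * K) * (orientI c d w * K)).
    by rewrite mul_self_gt0 // mulf_neq0.
  by rewrite /v /K /orient !coordE; ring.
have [s [s01 eX]] := sxy; have [t [t01 eX']] := scd.
have [z [z1 z2]] := open_conv_meet O1 O2 s01 t01 (etrans (esym eX) eX') v1 v2.
by move: nt; rewrite (tri_open_conv_inj triT uT wT z1 z2) eqxx.
Qed.

Lemma opposite_sides_cross a b c d : a != b -> c != d ->
  orientI a b c * orientI a b d < 0 -> orientI c d a * orientI c d b < 0 ->
  exists X, open_seg (pt a) (pt b) X /\ open_seg (pt c) (pt d) X.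
Proof.
move=> ab cd h1 h2.
have n1 : orientI c d a - orientI c d b != 0.
  by apply: contraTneq h2 => /eqP; rewrite subr_eq0 => /eqP ->; rewrite -leNgt -expr2 sqr_ge0.
have n2 : orientI a b c - orientI a b d != 0.
  by apply: contraTneq h1 => /eqP; rewrite subr_eq0 => /eqP ->; rewrite -leNgt -expr2 sqr_ge0.
set s := orientI c d a / (orientI c d a - orientI c d b).
set t := orientI a b c / (orientI a b c - orientI a b d).
exists ((1 - s) *: pt a + s *: pt b); split; first by exists s; split => //; exact: mul_lt0_frac.
exists t; split; first exact: mul_lt0_frac.
rewrite /s /t; rewrite /orient in n1 n2.
by apply: row2_eq; rewrite !coordE /orient; field; rewrite n1 n2.
Qed.

Lemma exit_point_open_seg a d x y Z la lg : empty_seg x y -> open_seg (pt x) (pt y) Z ->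
  0 < la -> 0 <= lg -> la + lg = 1 -> Z = la *: pt a + lg *: pt d ->
  open_seg (pt a) (pt d) Z.
Proof.
move=> [_ exy] sZ la0 lg0 sum eZ; case: (ltrP 0 lg) => lg_gt0.
  by exists lg; split; [apply/andP; split; lra | rewrite eZ (_ : la = 1 - lg) //; lra].
case: (exy a); move: sZ; rewrite eZ (_ : lg = 0) ?scale0r ?addr0; last by lra.
by rewrite (_ : la = 1) ?scale1r //; lra.
Qed.

(* Walk from the crossing point X on cd towards x, through the triangle acd,
   until the first barycentric coordinate of c or d vanishes. *)
Lemma empty_seg_exit T a c d x y X : triangulation pt T -> [set a; c; d] \in T ->
  orientI a c d != 0 -> empty_seg x y ->
  open_seg (pt x) (pt y) X -> open_seg (pt c) (pt d) X ->
  0 < orientI c d x * orientI c d a ->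
  [\/ x = a, exists Z, open_seg (pt a) (pt c) Z /\ open_seg (pt x) (pt y) Z |
             exists Z, open_seg (pt a) (pt d) Z /\ open_seg (pt x) (pt y) Z].
Proof.
move=> triT acdT O0 exy sxy [t [/andP [t0 t1] eX]] side.
have ex := orient_cramer (pt x) O0; have hs := orient_cramer_sum (pt x) O0.
move: ex hs; set La := _ / _; set Lc := _ / _; set Ld := _ / _ => ex hs.
have La0 : 0 < La.
  by apply: divr_gt0_of_mul => //; move: side; congr (0 < _); rewrite /orient; ring.
have [->|xa] := eqVneq x a; first by constructor 1.
have neg : Lc < 0 \/ Ld < 0.
  case: (ltrP Lc 0) => [|Lc0]; first by left.
  case: (ltrP Ld 0) => [|Ld0]; first by right.
  exfalso.
  have : in_conv pt [set a; c; d] (pt x) by rewrite ex; apply: in_conv3; rewrite // ltW.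
  move/(tri_vertex_of_conv triT acdT)/set3P => -[] x_eq; move: xa side; rewrite x_eq.
  - by rewrite eqxx.
  - by rewrite orient_xyx mul0r ltxx.
  - by rewrite orient_xyy mul0r ltxx.
have [th th01 [bt0 gm0 [bt|gm]]] := convex_exit (b1 := Lc) (g1 := Ld)
  (ltac:(lra) : 0 < 1 - t) t0 neg.
all: have [th0 th1] := andP th01.
all: have sZ := open_seg_shrink sxy th01.
all: have eZ : (1 - th) *: X + th *: pt x = (th * La) *: pt a +
        ((1 - th) * (1 - t) + th * Lc) *: pt c + ((1 - th) * t + th * Ld) *: pt d
  by rewrite eX {1}ex; apply: row2_eq; rewrite !coordE; ring.
all: have thLa : 0 < th * La by rewrite mulr_gt0.
all: have hsum : th * La + th * Lc + th * Ld = th by rewrite -!mulrDr hs mulr1.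
- constructor 3; exists ((1 - th) *: X + th *: pt x); split => //.
  apply: exit_point_open_seg sZ thLa gm0 _ _ => //; first by lra.
  by rewrite eZ bt scale0r addr0.
- constructor 2; exists ((1 - th) *: X + th *: pt x); split => //.
  apply: exit_point_open_seg sZ thLa bt0 _ _ => //; first by lra.
  by rewrite eZ gm scale0r addr0.
Qed.

Lemma quad_crossing_side_of_sides T a b c d x y X : triangulation pt T ->
  [set a; c; d] \in T -> [set b; c; d] \in T -> orientI a c d != 0 -> orientI b c d != 0 ->
  empty_seg x y -> open_seg (pt x) (pt y) X -> open_seg (pt c) (pt d) X ->
  0 < orientI c d x * orientI c d a -> 0 < orientI c d y * orientI c d b ->
  [set x; y] = [set a; b] \/ exists u w Z, [/\ u \in [set a; b], w \in [set c; d],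
    open_seg (pt u) (pt w) Z & open_seg (pt x) (pt y) Z].
Proof.
move=> triT acdT bcdT Oa Ob exy sxy scd hx hy.
have ey := empty_seg_exit triT bcdT Ob (empty_segC exy) (open_segC sxy) scd hy.
case: (empty_seg_exit triT acdT Oa exy sxy scd hx) => [xa|[Z [z1 z2]]|[Z [z1 z2]]].
- subst x; case: ey => [->|[Z [z1 z2]]|[Z [z1 z2]]]; [by left | right..].
  + by exists b, c, Z; rewrite !inE !eqxx ?orbT; split => //; apply: open_segC.
  + by exists b, d, Z; rewrite !inE !eqxx ?orbT; split => //; apply: open_segC.
- by right; exists a, c, Z; rewrite !inE !eqxx ?orbT.
- by right; exists a, d, Z; rewrite !inE !eqxx ?orbT.
Qed.

Lemma quad_crossing_side T a b c d x y X : triangulation pt T ->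
  [set a; c; d] \in T -> [set b; c; d] \in T -> orientI a c d != 0 -> orientI b c d != 0 ->
  orientI c d a * orientI c d b < 0 -> empty_seg x y ->
  open_seg (pt x) (pt y) X -> open_seg (pt c) (pt d) X -> orientI c d x * orientI c d y < 0 ->
  [set x; y] = [set a; b] \/ exists u w Z, [/\ u \in [set a; b], w \in [set c; d],
    open_seg (pt u) (pt w) Z & open_seg (pt x) (pt y) Z].
Proof.
move=> triT acdT bcdT Oa Ob ab exy sxy scd xy.
case: (mul_lt0_sign xy ab) => [[hx hy]|[hx hy]].
  exact: quad_crossing_side_of_sides triT acdT bcdT Oa Ob exy sxy scd hx hy.
rewrite [[set a; b]]setUC.
exact: quad_crossing_side_of_sides triT bcdT acdT Ob Oa exy sxy scd hx hy.
Qed.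

End Crossings.

Section Flips.
Variables (R : realFieldType) (n : nat) (pt : 'I_n -> 'rV[R]_2).
Local Notation orientI a b c := (orient (pt a) (pt b) (pt c)).

Record flip_data (T T' : {set {set 'I_n}}) (e e' : {set 'I_n}) (a b c d : 'I_n) : Prop :=
  FlipData {
 fd_ab : a != b; fd_ac : a != c; fd_ad : a != d; fd_bc : b != c; fd_bd : b != d; fd_cd : c != d;
 fd_e : e = [set a; b]; fd_e' : e' = [set c; d];
 fd_abc : [set a; b; c] \in T; fd_abd : [set a; b; d] \in T;
 fd_acd : [set a; c; d] \in T'; fd_bcd : [set b; c; d] \in T';
 fd_new : forall t, t \in T' ->
   [\/ [/\ t \in T, t != [set a; b; c] & t != [set a; b; d]],
        t = [set a; c; d] | t = [set b; c; d]];
 fd_keep : forall t, t \in T -> t != [set a; b; c] -> t != [set a; b; d] -> t \in T';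
 fd_sides_ab : orientI a b c * orientI a b d < 0;
 fd_sides_cd : orientI c d a * orientI c d b < 0;
 fd_orient_acd : orientI a c d != 0; fd_orient_bcd : orientI b c d != 0 }.

Lemma flip_stepP T e e' T' : triangulation pt T -> triangulation pt T' ->
  flip_step pt T e e' T' -> exists a b c d, flip_data T T' e e' a b c d.
Proof.
move=> triT triT' [a [b [c [d [abcd -> /andP [abc abd] [_ ->] eT']]]]].
move: abcd; rewrite /= !inE !negb_or => /and4P [/and3P [ab ac ad] /andP [bc bd] cd _].
exists a, b, c, d.
have acd : [set a; c; d] \in T' by rewrite eT' !inE eqxx !orbT.
have bcd : [set b; c; d] \in T' by rewrite eT' !inE eqxx !orbT.
have [_ _ cda _ _] := set3_perm a c d; have [_ _ cdb _ _] := set3_perm b c d.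
constructor => //.
- by move=> t; rewrite eT' !inE => /or3P [/and3P [? ? ?]|/eqP ->|/eqP ->];
    [constructor 1 | constructor 2 | constructor 3].
- by move=> t tT h1 h2; rewrite eT' !inE h1 h2 tT.
- by apply: (tri_opposite_sides triT abc abd); rewrite // eq_sym.
- rewrite cda cdb in acd bcd.
  by apply: (tri_opposite_sides triT' acd bcd); rewrite // eq_sym.
- by apply: (tri_orient_neq0 triT'); rewrite // eq_sym.
- by apply: (tri_orient_neq0 triT'); rewrite // eq_sym.
Qed.

Lemma share_triI (T : {set {set 'I_n}}) (t : {set 'I_n}) (u w u' w' : 'I_n) :
  t \in T -> u \in t -> w \in t -> u' \in t -> w' \in t ->
  u != w -> u' != w' -> [set u; w] != [set u'; w'] -> share_tri T [set u; w] [set u'; w'].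
Proof.
move=> tT hu hw hu' hw' uw uw' ne; split => //; try by rewrite /is_edge cards2 ?uw ?uw'.
by exists t => //; apply/andP; split; apply/subsetP => z /set2P [] ->.
Qed.

Lemma share_tri_edge (T : {set {set 'I_n}}) g e : share_tri T g e -> edge_of T g.
Proof. by case=> ge _ _ [t tT /andP [gt _]]; split => //; exists t. Qed.

Lemma set_neq_witness (T : finType) (A B : {set T}) z : z \in A -> z \notin B -> A != B.
Proof. by move=> zA; apply: contraNneq => <-. Qed.

Section FlipData.
Variables (T T' : {set {set 'I_n}}) (e e' : {set 'I_n}) (a b c d : 'I_n).
Hypothesis fd : flip_data T T' e e' a b c d.

Lemma flip_eps_edge : edge_of T e.
Proof.
by rewrite (fd_e fd); apply: (edge_of_sub (fd_abc fd)); rewrite ?inE ?eqxx ?orbT ?(fd_ab fd).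
Qed.

Lemma flip_phi_edge : edge_of T' e'.
Proof.
by rewrite (fd_e' fd); apply: (edge_of_sub (fd_acd fd)); rewrite ?inE ?eqxx ?orbT ?(fd_cd fd).
Qed.

Lemma flip_edge_new g : edge_of T' g -> edge_of T g \/ g = e'.
Proof.
move=> [ge [t tT' sub]].
case: (fd_new fd tT') => [[tT _ _]|et|et]; first by left; split => //; exists t.
all: subst t; case: (edge_sub3 ge sub) => ->; rewrite ?(fd_e' fd); [left|left|by right].
- by apply: (edge_of_sub (fd_abc fd)); rewrite ?inE ?eqxx ?orbT ?(fd_ac fd).
- by apply: (edge_of_sub (fd_abd fd)); rewrite ?inE ?eqxx ?orbT ?(fd_ad fd).
- by apply: (edge_of_sub (fd_abc fd)); rewrite ?inE ?eqxx ?orbT ?(fd_bc fd).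
- by apply: (edge_of_sub (fd_abd fd)); rewrite ?inE ?eqxx ?orbT ?(fd_bd fd).
Qed.

Lemma flip_removes : triangulation pt T -> ~ edge_of T' e.
Proof.
move=> triT [_ [t tT' sub]]; rewrite (fd_e fd) in sub.
have ha : a \in t by apply: (subsetP sub); rewrite !inE eqxx.
have hb : b \in t by apply: (subsetP sub); rewrite !inE eqxx orbT.
case: (fd_new fd tT') => [[tT n1 n2]|et|et]; last first.
- by subst t; case/set3P: ha => ea; move: (fd_ab fd) (fd_ac fd) (fd_ad fd); rewrite ea eqxx.
- by subst t; case/set3P: hb => eb; move: (fd_ab fd) (fd_bc fd) (fd_bd fd); rewrite eb eqxx.
have [z [et Oz]] := tri_opposite_vertex triT tT ha hb (fd_ab fd); rewrite et in tT n1 n2.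
have [Oc Od] := mul_lt0_neq0 (fd_sides_ab fd).
have side u : [set a; b; u] \in T -> [set a; b; u] != [set a; b; z] ->
    orientI a b u * orientI a b z <= 0.
  move=> uT ne; rewrite leNgt; apply/negP => /(tri_same_side triT uT tT) e1.
  by rewrite e1 eqxx in ne.
have sc := side _ (fd_abc fd) ltac:(by rewrite eq_sym).
have sd := side _ (fd_abd fd) ltac:(by rewrite eq_sym).
have := mulr_le0 sc sd.
rewrite (_ : orientI a b c * orientI a b z * (orientI a b d * orientI a b z) =
  (orientI a b c * orientI a b d) * (orientI a b z * orientI a b z)).
  by rewrite pmulr_lge0 ?mul_self_gt0 // => /(lt_le_trans (fd_sides_ab fd)); rewrite ltxx.
by ring.
Qed.

Lemma flip_notin : [/\ c \notin [set a; b], d \notin [set a; b],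
  a \notin [set c; d] & b \notin [set c; d]].
Proof.
move: (fd_ac fd) (fd_ad fd) (fd_bc fd) (fd_bd fd) => ac ad bc bd.
by split; rewrite !inE !negb_or ?[c == _]eq_sym ?[d == _]eq_sym ?ac ?bc ?ad ?bd.
Qed.

Lemma flip_old_share g : is_edge g ->
  (g \subset [set a; b; c]) || (g \subset [set a; b; d]) -> g = e \/ share_tri T g e.
Proof.
have [cab dab _ _] := flip_notin; rewrite (fd_e fd).
move=> ge /orP [] sub; case: (edge_sub3 ge sub) => ->; [by left|right|right|by left|right|right].
- apply: (share_triI (fd_abc fd)); rewrite ?inE ?eqxx ?orbT ?(fd_ac fd) ?(fd_ab fd) //.
  by apply: (set_neq_witness _ cab); rewrite !inE eqxx ?orbT.
- apply: (share_triI (fd_abc fd)); rewrite ?inE ?eqxx ?orbT ?(fd_bc fd) ?(fd_ab fd) //.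
  by apply: (set_neq_witness _ cab); rewrite !inE eqxx ?orbT.
- apply: (share_triI (fd_abd fd)); rewrite ?inE ?eqxx ?orbT ?(fd_ad fd) ?(fd_ab fd) //.
  by apply: (set_neq_witness _ dab); rewrite !inE eqxx ?orbT.
- apply: (share_triI (fd_abd fd)); rewrite ?inE ?eqxx ?orbT ?(fd_bd fd) ?(fd_ab fd) //.
  by apply: (set_neq_witness _ dab); rewrite !inE eqxx ?orbT.
Qed.

Lemma flip_side_share u w : u \in [set a; b] -> w \in [set c; d] ->
  u != w /\ share_tri T [set u; w] e.
Proof.
have [cab dab _ _] := flip_notin; move=> hu hw.
have wab : w \notin [set a; b] by case/set2P: hw => ->.
have uw : u != w by apply: contraNneq wab => <-.
have sub : ([set u; w] \subset [set a; b; c]) || ([set u; w] \subset [set a; b; d]).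
  case/set2P: hw => ->; apply/orP; [left|right]; apply/subsetP => z /set2P [] ->;
    by [case/set2P: hu => ->; rewrite !inE eqxx ?orbT | rewrite !inE eqxx ?orbT].
split => //; case: (flip_old_share _ sub) => //; first by rewrite /is_edge cards2 uw.
by rewrite (fd_e fd) => e_uw; move: wab; rewrite -e_uw !inE eqxx orbT.
Qed.

Lemma flip_new_share g : is_edge g ->
  (g \subset [set a; b; c]) || (g \subset [set a; b; d]) -> g = e \/ share_tri T' e' g.
Proof.
have [_ _ acd bcd] := flip_notin; rewrite (fd_e fd) (fd_e' fd).
move=> ge /orP [] sub; case: (edge_sub3 ge sub) => ->; [by left|right|right|by left|right|right].
- apply: (share_triI (fd_acd fd)); rewrite ?inE ?eqxx ?orbT ?(fd_ac fd) ?(fd_cd fd) //.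
  by rewrite eq_sym; apply: (set_neq_witness _ acd); rewrite !inE eqxx.
- apply: (share_triI (fd_bcd fd)); rewrite ?inE ?eqxx ?orbT ?(fd_bc fd) ?(fd_cd fd) //.
  by rewrite eq_sym; apply: (set_neq_witness _ bcd); rewrite !inE eqxx.
- apply: (share_triI (fd_acd fd)); rewrite ?inE ?eqxx ?orbT ?(fd_ad fd) ?(fd_cd fd) //.
  by rewrite eq_sym; apply: (set_neq_witness _ acd); rewrite !inE eqxx.
- apply: (share_triI (fd_bcd fd)); rewrite ?inE ?eqxx ?orbT ?(fd_bd fd) ?(fd_cd fd) //.
  by rewrite eq_sym; apply: (set_neq_witness _ bcd); rewrite !inE eqxx.
Qed.

Lemma flip_diagonals_cross : crosses pt e' e.
Proof.
have [X [sab scd]] := opposite_sides_cross (fd_ab fd) (fd_cd fd) (fd_sides_ab fd) (fd_sides_cd fd).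
have [cab _ _ _] := flip_notin; rewrite (fd_e fd) (fd_e' fd).
apply: crossesI (fd_cd fd) (fd_ab fd) _ scd sab.
by apply: (set_neq_witness _ cab); rewrite !inE eqxx.
Qed.

End FlipData.
End Flips.

Local Close Scope ring_scope.

Lemma first_in_range (P : pred nat) i j :
  (forall p, (i < p <= j)%N -> ~~ P p) \/
  exists p, [/\ (i < p <= j)%N, P p & forall q, (i < q < p)%N -> ~~ P q].
Proof.
have [/hasP [p0 + P0]|none] := boolP (has P (index_iota i.+1 j.+1)).
  rewrite mem_index_iota => ip0; right.
  have ex : exists p, (i < p <= j) && P p by exists p0; rewrite -ltnS ip0 P0.
  case: (ex_minnP ex) => p /andP [ip Pp] pmin; exists p; split => // q iq.
  by apply/negP => Pq; have := pmin q; rewrite Pq andbT; lia.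
left => p ip; apply: contraNN none => Pp; apply/hasP; exists p => //.
by rewrite mem_index_iota; lia.
Qed.

Section Run.
Variables (R : realFieldType) (n : nat) (pt : 'I_n -> 'rV[R]_2).
Hypothesis pt_inj : injective pt.
Variables (Ti : {set {set 'I_n}}) (k : nat) (eps phi : nat -> {set 'I_n})
  (Ts : nat -> {set {set 'I_n}}).
Hypothesis run : valid_run pt Ti k eps phi Ts.
Local Notation adj := (adj k eps phi Ts).
Local Notation dpath := (dpath k eps phi Ts).

Lemma run_tri j : (j <= k)%N -> triangulation pt (Ts j).
Proof. by case: run => _ + _; apply. Qed.

Lemma run_flip j : (1 <= j <= k)%N ->
  exists a b c d, flip_data pt (Ts j.-1) (Ts j) (eps j) (phi j) a b c d.
Proof.
move=> jk; case: run => _ _ flips.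
by apply: flip_stepP (flips _ jk); apply: run_tri; lia.
Qed.

Lemma run_removed j : (1 <= j <= k)%N -> ~ edge_of (Ts j) (eps j).
Proof.
move=> jk; have [a [b [c [d fd]]]] := run_flip jk.
by apply: flip_removes fd _; apply: run_tri; lia.
Qed.

Lemma run_edge_new j g : (1 <= j <= k)%N -> edge_of (Ts j) g -> edge_of (Ts j.-1) g \/ g = phi j.
Proof. by move=> jk; have [a [b [c [d fd]]]] := run_flip jk; exact: (flip_edge_new fd). Qed.

Lemma run_eps_edge j : (1 <= j <= k)%N -> edge_of (Ts j.-1) (eps j).
Proof. by move=> jk; have [a [b [c [d fd]]]] := run_flip jk; apply: flip_eps_edge fd. Qed.

Lemma run_phi_edge j : (1 <= j <= k)%N -> edge_of (Ts j) (phi j).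
Proof. by move=> jk; have [a [b [c [d fd]]]] := run_flip jk; apply: flip_phi_edge fd. Qed.

Lemma last_creation i j g : (i <= j <= k)%N -> edge_of (Ts j) g -> ~ edge_of (Ts i) g ->
  exists q, [/\ (i < q <= j)%N, phi q = g & forall p, (q < p <= j)%N -> eps p <> g].
Proof.
elim: j => [|j IH] ijk gj gi; first by move: gi; have -> : i = 0%N by lia.
have [ei|ij] := eqVneq i j.+1; first by rewrite ei in gi.
have jk : (1 <= j.+1 <= k)%N by lia.
case: (run_edge_new jk gj) => [gj'|->]; last first.
  by exists j.+1; split => [|//|p pj]; [lia | exfalso; lia].
have [q [iq qg after]] := IH ltac:(lia) gj' gi.
exists q; split => //; first by lia.
move=> p qp; have [->|pj] := eqVneq p j.+1; last by apply: after; lia.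
by move=> epg; apply: (run_removed jk); rewrite epg.
Qed.

Lemma adjI i j : (1 <= i)%N -> (i < j <= k)%N ->
  phi i = eps j \/ share_tri (Ts j.-1) (phi i) (eps j) ->
  (forall p, (i < p < j)%N -> eps p != phi i) -> adj i j.
Proof. by move=> i1 /andP [ij jk] link later; split => // p /later /eqP. Qed.

Lemma dpath_step i j : adj i j -> dpath i j.
Proof. exact: t_step. Qed.

Lemma dpath_trans i j h : dpath i j -> dpath j h -> dpath i h.
Proof. exact: t_trans. Qed.

Definition created_from i m g := exists q, [/\ (i <= q <= m)%N, phi q = g,
  forall p, (q < p <= m)%N -> eps p <> g & q = i \/ dpath i q].

Lemma created_dpath i h g : (1 <= i)%N -> (i < h <= k)%N -> created_from i h.-1 g ->
  g = eps h \/ share_tri (Ts h.-1) g (eps h) -> dpath i h.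
Proof.
move=> i1 ih [q [iq <- later reach]] link.
have a : adj q h by split => //; try lia; move=> p qp; apply: later; lia.
case: reach => [qi|iq']; first by rewrite -qi; apply: dpath_step.
exact: dpath_trans iq' (dpath_step a).
Qed.

Definition crossings_created i m :=
  forall g, edge_of (Ts m) g -> crosses pt g (eps i) -> created_from i m g.

Lemma dpath_of_eps_eq_reach i h : (1 <= i)%N -> (i < h <= k)%N ->
  (forall q, (i < q < h)%N -> phi q = eps i -> dpath i q) -> eps i = eps h -> dpath i h.
Proof.
move=> i1 ih reach ee.
have [q [iq qe later]] := @last_creation i h.-1 (eps i) ltac:(lia)
  ltac:(by rewrite ee; apply: run_eps_edge; lia) ltac:(by apply: run_removed; lia).
apply: (created_dpath i1 ih _ (or_introl ee)).
by exists q; split => //; [lia | right; apply: reach => //; lia].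
Qed.

Lemma dpath_of_phi_eps_created i h : (1 <= i)%N -> (i < h <= k)%N ->
  crossings_created i h.-1 -> phi h = eps i -> dpath i h.
Proof.
move=> i1 ih created pe; have [a [b [c [d fd]]]] := run_flip (ltac:(lia) : (1 <= h <= k)%N).
have cr : crosses pt (eps h) (eps i) by rewrite -pe; apply/crossesC/(flip_diagonals_cross fd).
exact: created_dpath i1 ih (created _ (flip_eps_edge fd) cr) (or_introl erefl).
Qed.

Lemma crossing_dpath i m : (1 <= i <= m)%N -> (m < k)%N -> crossings_created i m ->
  (forall q, (i < q <= m)%N -> phi q = eps i -> dpath i q) ->
  crosses pt (phi m.+1) (eps i) -> dpath i m.+1.
Proof.
move=> im mk created reach [ne [c' [d' [x [y [_ xy e1 e2 [X [s1 s2]]]]]]]].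
have [a [b [c [d fd]]]] := run_flip (ltac:(lia) : (1 <= m.+1 <= k)%N).
have exy : empty_seg pt x y.
  have triTi : triangulation pt (Ts i.-1) by apply: run_tri; lia.
  by apply: (edge_empty_seg pt_inj triTi) xy; rewrite -e2; apply: run_eps_edge; lia.
have ecd : empty_seg pt c d.
  apply: (edge_empty_seg pt_inj (run_tri mk)) (fd_cd fd).
  by rewrite -(fd_e' fd); apply: run_phi_edge; lia.
have sX : open_seg (pt c) (pt d) X.
  by case: (set2_eq (etrans (esym (fd_e' fd)) e1)) => -[-> ->] //; apply: open_segC.
have nxy : [set x; y] != [set c; d] by rewrite -e2 -(fd_e' fd) eq_sym.
have [_ xy_sides] := crossing_sides2 pt_inj exy ecd s2 sX nxy.
case: (quad_crossing_side (run_tri mk) (fd_acd fd) (fd_bcd fd) (fd_orient_acd fd)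
  (fd_orient_bcd fd) (fd_sides_cd fd) exy s2 sX xy_sides) => [e_ab|[u [w [Z [hu hw z1 z2]]]]].
  apply: (dpath_of_eps_eq_reach (ltac:(lia) : (1 <= i)%N) (ltac:(lia) : (i < m.+1 <= k)%N)).
    by move=> q qm; apply: reach; lia.
  by rewrite e2 e_ab (fd_e fd).
have [uw sh] := flip_side_share fd hu hw.
have cr : crosses pt [set u; w] (eps i).
  rewrite e2; apply: crossesI uw xy _ z1 z2.
  have [Ox Oy] := mul_lt0_neq0 xy_sides.
  apply: (set_neq_witness (z := w)); first by rewrite !inE eqxx orbT.
  by apply/negP => /set2P [] wxy; [move: Ox | move: Oy]; rewrite -wxy;
    case/set2P: hw => ->; rewrite ?orient_xyx ?orient_xyy eqxx.
exact: (created_dpath (ltac:(lia) : (1 <= i)%N) (ltac:(lia) : (i < m.+1 <= k)%N)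
  (created _ (share_tri_edge sh) cr) (or_intror sh)).
Qed.

Lemma crossings_createdP i m : (1 <= i <= m)%N -> (m <= k)%N -> crossings_created i m.
Proof.
elim/ltn_ind: m => -[|m] IH im mk; first by lia.
have ik : (1 <= i <= k)%N by lia.
have [ei|ni] := eqVneq i m.+1.
  rewrite -ei => g gi cr; case: (run_edge_new ik gi) => [gi'|->].
    have triT : triangulation pt (Ts i.-1) by apply: run_tri; lia.
    by case: (edges_not_crosses pt_inj triT gi' (run_eps_edge ik) cr).
  by exists i; split => //; [lia | move=> p ip; exfalso; lia | left].
move=> g gm cr; have mk' : (1 <= m.+1 <= k)%N by lia.
case: (run_edge_new mk' gm) => [gm'|eg].
  have [q [iq qg later reach]] := IH m (ltnSn m) ltac:(lia) ltac:(lia) g gm' cr.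
  exists q; split => //; first by lia.
  move=> p qp; have [->|pm] := eqVneq p m.+1; last by apply: later; lia.
  by move=> ep; apply: (run_removed mk'); rewrite ep.
exists m.+1; split => //; [lia | move=> p mp; exfalso; lia | right].
have im' : (1 <= i <= m)%N by lia.
apply: (crossing_dpath im' _ (IH m (ltnSn m) im' ltac:(lia))) => [|q qm pe|];
  [lia | | by rewrite -eg].
by apply: dpath_of_phi_eps_created => //; [lia | lia | apply: IH; lia].
Qed.

Lemma dpath_of_phi_eps i h : (1 <= i)%N -> (i < h <= k)%N -> phi h = eps i -> dpath i h.
Proof. by move=> i1 ih; apply: dpath_of_phi_eps_created => //; apply: crossings_createdP; lia. Qed.

Lemma dpath_of_eps_eq i h : (1 <= i)%N -> (i < h <= k)%N -> eps i = eps h -> dpath i h.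
Proof. by move=> i1 ih; apply: dpath_of_eps_eq_reach => // q iq; apply: dpath_of_phi_eps; lia. Qed.

Lemma dpath_of_crosses i h : (1 <= i)%N -> (i < h <= k)%N ->
  crosses pt (phi h) (eps i) -> dpath i h.
Proof.
move=> i1 ih; have -> : h = h.-1.+1 by lia.
have im : (1 <= i <= h.-1)%N by lia.
apply: (crossing_dpath im _ (crossings_createdP im _)); try lia.
by move=> q iq; apply: dpath_of_phi_eps; lia.
Qed.

Lemma dpath_of_phi_eq_eps i h : (1 <= i)%N -> (i < h <= k)%N -> phi i = eps h -> dpath i h.
Proof.
move=> i1 ih pe.
case: (first_in_range (fun p => eps p == phi i) i h.-1) => [kept|[p [ip /eqP ep before]]].
  apply: dpath_step; apply: adjI => //; first by left.
  by move=> p ip; apply: kept; lia.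
have a : adj i p.
  by apply: adjI; [done | lia | left | move=> q iq; apply: before; lia].
by apply: dpath_trans (dpath_step a) (dpath_of_eps_eq _ _ _); [lia | lia | rewrite ep pe].
Qed.

(* Follow [phi i] forward: either it is flipped away at some [p], and then its
   last re-creation [q] is reachable from [p]; or the triangle it shares with
   [eps h] survives, or is flipped and [phi] of that flip links to [eps h]. *)
Lemma dpath_of_share_tri i j h : (1 <= i)%N -> (i <= j)%N -> (j < h <= k)%N ->
  share_tri (Ts j) (phi i) (eps h) -> dpath i h.
Proof.
have [d hd] : exists d, (h - i)%N = d by exists (h - i)%N.
elim/ltn_ind: d i j hd => d IH i j hd i1 ij jh sh.
have [e he] : exists e, (h - j)%N = e by exists (h - j)%N.
elim: e j he ij jh sh => [|e IHe] j he ij jh sh; first by lia.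
case: (first_in_range (fun p => eps p == phi i) i j) => [kept|[p [ip /eqP ep before]]].
  have adj_i (r : nat) : (i < r <= k)%N -> (r <= j.+1)%N ->
      phi i = eps r \/ share_tri (Ts r.-1) (phi i) (eps r) -> adj i r.
    by move=> ir rj link; apply: adjI => // q iq; apply: kept; lia.
  have [ejh|jh1] := eqVneq j.+1 h.
    by subst h; apply/dpath_step/adj_i; [lia | lia | right].
  have [a [b [c [d' fd]]]] := run_flip (ltac:(lia) : (1 <= j.+1 <= k)%N).
  case: sh => ge fe ne [t tT /andP [gt ft]].
  have [removed|kept_t] := boolP ((t == [set a; b; c]) || (t == [set a; b; d'])).
    have sub (g : {set 'I_n}) : g \subset t ->
        (g \subset [set a; b; c]) || (g \subset [set a; b; d']).
      by case/orP: removed => /eqP <- ->; rewrite ?orbT.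
    have a1 : adj i j.+1 by apply: (adj_i _ _ _ (flip_old_share fd ge (sub _ gt))); lia.
    apply: (dpath_trans (dpath_step a1)).
    case: (flip_new_share fd fe (sub _ ft)) => [e_eq|sh'].
      by apply: dpath_of_eps_eq; rewrite ?e_eq //; lia.
    by apply: (IH (h - j.+1)%N _ j.+1 j.+1) => //; lia.
  have tT' : t \in Ts j.+1.
    by move: kept_t; rewrite negb_or => /andP [n1 n2]; apply: (fd_keep fd).
  apply: (IHe j.+1) => //; try lia.
  by split => //; exists t => //; rewrite gt ft.
have a1 : adj i p by apply: adjI; [done | lia | left | move=> q iq; apply: before; lia].
have [q [pq qg later]] := @last_creation p j (phi i) ltac:(lia) (share_tri_edge sh)
  ltac:(by rewrite -ep; apply: run_removed; lia).
have dpq : dpath p q by apply: dpath_of_phi_eps; rewrite ?qg //; lia.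
have dqh : dpath q h by apply: (IH (h - q)%N _ q j) => //; rewrite ?qg //; lia.
exact: dpath_trans (dpath_step a1) (dpath_trans dpq dqh).
Qed.

End Run.

Unset Implicit Arguments.

Theorem lemma7 (R : realFieldType) (n : nat) (pt : 'I_n -> 'rV[R]_2)
    (pt_inj : injective pt)
    (Ti Tf : {set {set 'I_n}}) (k : nat) (eps phi : nat -> {set 'I_n})
    (Ts : nat -> {set {set 'I_n}}) (C : nat -> Prop) (i h : nat) :
  normalized_solution pt Ti Tf k eps phi Ts ->
  is_component k eps phi Ts C -> C i -> C h -> (i < h)%N ->
  (crosses pt (phi h) (eps i) \/
   phi h = eps i \/
   eps i = eps h \/
   (phi i = eps h \/
    exists j, (i <= j < h)%N /\ share_tri (Ts j) (phi i) (eps h))) ->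
  dpath k eps phi Ts i h.
Proof.
move=> [[run _ _] _ _] [j0 [_ inC]] /inC [/andP [i1 _] _] /inC [/andP [_ hk] _] ih.
have ihk : (i < h <= k)%N by rewrite ih hk.
case=> [cr|[pe|[ee|[pe|[j [/andP [ij jh] sh]]]]]].
- exact: (dpath_of_crosses pt_inj run i1 ihk cr).
- exact: (dpath_of_phi_eps pt_inj run i1 ihk pe).
- exact: (dpath_of_eps_eq pt_inj run i1 ihk ee).
- exact: (dpath_of_phi_eq_eps pt_inj run i1 ihk pe).
- have jhk : (j < h <= k)%N by rewrite jh hk.
  exact: (dpath_of_share_tri pt_inj run i1 ij jhk sh).
Qed.
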